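(* Let $\mathcal F$ be an upper Furstenberg family, written as in the definition of upper family, which satisfies the invariance property: if $F\in\mathcal F_{\delta,m}$ and $k\in\mathbb N$ then $F+k\in\mathcal F_{\delta,m}$. Then $A\in\mathcal F$ if and only if there are $\delta\in D$, numbers $k_m\in\mathbb N$ and finite sets $R_m\in\mathcal F_{\delta,m}$ ($m\in M$) such that $k_m+R_m\subseteq A$ for every $m\in M$.
   Context: $\mathbb N$ denotes the nonnegative integers. A Furstenberg family is hereditarily upward ($A\in\mathcal F$, $A\subseteq B$ imply $B\in\mathcal F$). A Furstenberg family $\mathcal F$ is upper if $\emptyset\notin\mathcal F$ and $\mathcal F=\bigcup_{\delta\in D}\mathcal F_\delta$ with $\mathcal F_\delta=\bigcap_{m\in M}\mathcal F_{\delta,m}$, where $D$ is an arbitrary index set, $M$ is countable, each $\mathcal F_{\delta,m}$ is finitely hereditarily upward (for each $A\in\mathcal F_{\delta,m}$ there is a finite set $F$ such that every $B$ with $F\cap A\subseteq B$ belongs to $\mathcal F_{\delta,m}$), and $\mathcal F$ is uniformly left invariant (for every $A\in\mathcal F$ there is $\delta\in D$ with $A-n:=\{k\in\mathbb N:k+n\in A\}\in\mathcal F_\delta$ for all $n\in\mathbb N$). *)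

From mathcomp Require Export all_boot.
From mathcomp Require Export boolp classical_sets cardinality.
Set Implicit Arguments. Unset Strict Implicit. Unset Printing Implicit Defensive.
Local Open Scope classical_set_scope.

Definition hered_upward (F : set (set nat)) : Prop :=
  forall A B : set nat, F A -> A `<=` B -> F B.

Definition fin_hered_upward (F : set (set nat)) : Prop :=
  forall A : set nat, F A ->
    exists Fi : set nat, finite_set Fi /\
      forall B : set nat, Fi `&` A `<=` B -> F B.

Definition shiftl (A : set nat) (n : nat) : set nat := [set k | A (k + n)%N].

Definition Fdelta (D M : Type) (Fdm : D -> M -> set (set nat)) (d : D) : set (set nat) :=
  [set A | forall m : M, Fdm d m A].

Definition upper_family_rep (D M : Type) (Fdm : D -> M -> set (set nat))
    (F : set (set nat)) : Prop :=
  hered_upward F /\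
  ~ F set0 /\
  countable [set: M] /\
  (forall d m, fin_hered_upward (Fdm d m)) /\
  (forall A : set nat, F A <-> exists d : D, Fdelta Fdm d A) /\
      (forall A : set nat, F A ->
         exists d : D, forall n : nat, Fdelta Fdm d (shiftl A n)).

From mathcomp Require Import all_boot boolp classical_sets cardinality.
Set Implicit Arguments. Unset Strict Implicit. Unset Printing Implicit Defensive.
Local Open Scope classical_set_scope.

(* Write F = U_d F_d with F_d = ∩_m F_{d,m}.  Only two features
   of an upper representation are used:
   - each F_{d,m} is finitely hereditarily upward, hence (a) hereditarily
     upward, and (b) every member A contains a finite member R ⊆ A
     (namely Fi ∩ A for the finite set Fi given by the definition);
   - A ∈ F iff A ∈ F_d for some d.
   If A ∈ F_d, the finite members R_m ⊆ A of F_{d,m} with k_m = 0 are the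
   witnesses.  Conversely, if k_m + R_m ⊆ A with R_m ∈ F_{d,m}, translation
   invariance gives k_m + R_m ∈ F_{d,m}, so A ∈ F_{d,m} by (a), for all m,
   i.e. A ∈ F_d ⊆ F. *)

Section FinitelyHereditarilyUpward.

Variable G : set (set nat).
Hypothesis finG : fin_hered_upward G.

Lemma fin_hered_upward_hered : hered_upward G.
Proof.
move=> A B GA AB; have [Fi [_ FiP]] := finG GA.
by apply: FiP => x [_ /AB].
Qed.

Lemma fin_hered_upward_finite_subset (A : set nat) :
  G A -> exists R : set nat, [/\ finite_set R, G R & R `<=` A].
Proof.
move=> GA; have [Fi [finFi FiP]] := finG GA.
exists (Fi `&` A); split; first exact: finite_setIl.
- exact: FiP.
- by move=> x [].
Qed.

End FinitelyHereditarilyUpward.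

Section Witnesses.

Variables (D M : Type) (Fdm : D -> M -> set (set nat)).
Hypothesis finFdm : forall d m, fin_hered_upward (Fdm d m).

Lemma Fdelta_finite_witnesses (d : D) (A : set nat) :
  Fdelta Fdm d A ->
  exists (k : M -> nat) (R : M -> set nat),
    forall m : M,
      [/\ finite_set (R m), Fdm d m (R m) & [set (k m + x)%N | x in R m] `<=` A].
Proof.
move=> FdA.
have /choice [R RP] : forall m, exists R : set nat,
    [/\ finite_set R, Fdm d m R & R `<=` A].
  by move=> m; exact: fin_hered_upward_finite_subset (@finFdm d m) _ (FdA m).
exists (fun=> 0%N), R => m; have [finR FR RA] := RP m; split=> //.
by move=> _ [x Rx <-]; rewrite add0n; exact: RA.
Qed.

Lemma witnesses_Fdelta (d : D) (k : M -> nat) (R : M -> set nat) (A : set nat) :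
  (forall (m : M) (S : set nat) (j : nat),
      Fdm d m S -> Fdm d m [set (x + j)%N | x in S]) ->
  (forall m : M, Fdm d m (R m) /\ [set (k m + x)%N | x in R m] `<=` A) ->
  Fdelta Fdm d A.
Proof.
move=> transl RP m; have [FR RA] := RP m.
have upG : hered_upward (Fdm d m) := fin_hered_upward_hered (@finFdm d m).
apply: upG (transl m _ (k m) FR) _.
by move=> _ [x Rx <-]; apply: RA; exists x; rewrite // addnC.
Qed.

End Witnesses.

Theorem mainTheorem7 (D M : Type) (Fdm : D -> M -> set (set nat))
    (F : set (set nat)) :
  upper_family_rep Fdm F ->
  (forall (d : D) (m : M) (S : set nat) (k : nat),
      Fdm d m S -> Fdm d m [set (x + k)%N | x in S]) ->
  forall A : set nat,
    F A <->
    exists (d : D) (k : M -> nat) (R : M -> set nat),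
      forall m : M,
        [/\ finite_set (R m), Fdm d m (R m) &
            [set (k m + x)%N | x in R m] `<=` A].
Proof.
move=> [_ [_ [_ [finFdm [FE _]]]]] transl A; split.
- move=> /FE [d FdA]; exists d; exact: Fdelta_finite_witnesses.
- move=> [d [k [R RP]]]; apply/FE; exists d.
  apply: (witnesses_Fdelta (k := k) (R := R) finFdm (transl d)) => m.
  by have [_ FR RA] := RP m.
Qed.
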